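(* Let $\beta,\gamma>0$, $\tilde S$, $\tilde R$ and $N>0$ be real numbers satisfying $\tilde R\ge 0$ and $N>\tilde S e^{(\beta/\gamma)\tilde R}+\tilde R$. Then the transcendental equation \[ x=N-\tilde S e^{(\beta/\gamma)\tilde R}e^{-(\beta/\gamma)x} \] has a unique solution $x=\alpha$ such that $\tilde R<\alpha<N$.
   Context: In the paper $N=\tilde S+\tilde E+\tilde I+\tilde R$ with $\tilde S,\tilde E,\tilde I,\tilde R$ the initial values of an SEIR model, and the standing assumptions $\tilde I>0$, $\tilde E>(\gamma/\delta)\tilde I$, $\tilde S>\delta\tilde E/(\beta\tilde I)$ (for a constant $\delta>0$) are in force; in particular $\tilde S>0$. *)

From Stdlib Require Import Reals.

(* Zeros of [x - N + C e^(-k x)] are exactly the solutions, with [C = S e^(k R)].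
   This function is negative at [R] and positive at [N], so the intermediate
   value theorem gives a solution in between.  It is convex (it lies above its
   tangent lines, as [exp] does), and a convex function that is negative at [R]
   vanishes at most once to the right of [R]. *)

From Stdlib Require Import Reals Lra Psatz.
Open Scope R_scope.

Lemma exp_tangent_le (x y : R) : exp x * (1 + (y - x)) <= exp y.
Proof.
  replace (exp y) with (exp x * exp (y - x)) by (rewrite <- exp_plus; f_equal; ring).
  apply Rmult_le_compat_l; [left; apply exp_pos | apply exp_ineq1_le].
Qed.

Lemma IVT_open (f : R -> R) (a b : R) :
  continuity f -> a < b -> f a < 0 -> 0 < f b -> exists x, a < x < b /\ f x = 0.
Proof.
  intros cont_f hab fa fb.
  destruct (IVT f a b cont_f hab fa fb) as [x [[hax hxb] fx]].
  exists x; split; [split|exact fx].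
  - destruct hax as [| <-]; [assumption|lra].
  - destruct hxb as [| ->]; [assumption|lra].
Qed.

Lemma supporting_lines_root_unique (f s : R -> R) (r a b : R) :
  (forall x y, f x + s x * (y - x) <= f y) -> f r < 0 ->
  r < a -> r < b -> f a = 0 -> f b = 0 -> a = b.
Proof.
  intros tangent fr.
  assert (le_eq : forall x y, r < x -> f x = 0 -> f y = 0 -> x <= y -> x = y).
  { intros x y hrx fx fy hxy.
    destruct hxy as [hxy|]; [exfalso|assumption].
    assert (slope_nonpos : s x <= 0).
    { pose proof (tangent x y) as t; rewrite fx, fy in t; nra. }
    pose proof (tangent x r) as t; rewrite fx in t; nra. }
  intros hra hrb fa fb.
  destruct (Rle_lt_dec a b) as [hab|hba].
  - now apply le_eq.
  - symmetry; apply le_eq; lra.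
Qed.

Definition exp_fixpoint_residual (N C k x : R) : R := x - N + C * exp (- k * x).

Lemma exp_fixpoint_residual_tangent (N C k x y : R) : 0 <= C ->
  exp_fixpoint_residual N C k x + (1 - k * C * exp (- k * x)) * (y - x)
  <= exp_fixpoint_residual N C k y.
Proof.
  intros hC; unfold exp_fixpoint_residual.
  pose proof (exp_tangent_le (- k * x) (- k * y)) as t.
  apply Rmult_le_compat_l with (r := C) in t; [nra|exact hC].
Qed.

Lemma exp_fixpoint_residual_continuous (N C k : R) :
  continuity (exp_fixpoint_residual N C k).
Proof. unfold exp_fixpoint_residual; reg. Qed.

Theorem lemma6 (beta gamma St Rt N : R)
  (hbeta : 0 < beta) (hgamma : 0 < gamma) (hS : 0 < St) (hN : 0 < N)
  (hR : 0 <= Rt) (hNbig : N > St * exp ((beta / gamma) * Rt) + Rt) :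
  exists! alpha : R,
    Rt < alpha < N /\
    alpha = N - St * exp ((beta / gamma) * Rt) * exp (- (beta / gamma) * alpha).
Proof.
  set (k := beta / gamma) in *.
  set (C := St * exp (k * Rt)) in *.
  set (f := exp_fixpoint_residual N C k).
  assert (hk : 0 < k) by (unfold k; apply Rdiv_lt_0_compat; lra).
  assert (hC : 0 < C) by (unfold C; pose proof (exp_pos (k * Rt)); nra).
  assert (f_Rt : f Rt < 0).
  { assert (C_at_Rt : C * exp (- k * Rt) = St).
    { unfold C; rewrite Rmult_assoc, <- exp_plus.
      replace (k * Rt + - k * Rt) with 0 by ring; rewrite exp_0; ring. }
    assert (St <= C).
    { pose proof (exp_ineq1_le (k * Rt)); pose proof (Rmult_le_pos k Rt (Rlt_le _ _ hk) hR).
      unfold C; nra. }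
    unfold f, exp_fixpoint_residual; rewrite C_at_Rt; lra. }
  assert (f_N : 0 < f N).
  { unfold f, exp_fixpoint_residual; pose proof (exp_pos (- k * N)); nra. }
  destruct (IVT_open f Rt N (exp_fixpoint_residual_continuous N C k))
    as [alpha [h_alpha f_alpha]]; [lra|exact f_Rt|exact f_N|].
  unfold f, exp_fixpoint_residual in f_alpha.
  exists alpha; split; [split; [exact h_alpha|lra]|].
  intros b [hb eb].
  apply (supporting_lines_root_unique f (fun x => 1 - k * C * exp (- k * x)) Rt);
    try lra.
  - intros x y; apply exp_fixpoint_residual_tangent; lra.
  - unfold f, exp_fixpoint_residual; lra.
  - unfold f, exp_fixpoint_residual; lra.
Qed.
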